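(* Let $n\ge 2$ and let $B$ be an $n\times n$ agreement matrix. Then $IA_\epsilon(B)$ exists. Moreover, if $l$ and $m$ are the numbers of non-null columns and non-null rows of $B$ respectively, then $$IA_\epsilon(B)=\begin{cases}\frac{n-l}{n}&\text{if }H(Y_B^+)=0,\\[2pt] \frac{n-m}{n}&\text{if }H(X_B^+)=0,\\[2pt] 1+\frac{H(Y_B^+)-H((X_BY_B)^+)}{H(X_B^+)}&\text{if }0<H(X_B^+)\le H(Y_B^+),\\[2pt] 1+\frac{H(X_B^+)-H((X_BY_B)^+)}{H(Y_B^+)}&\text{if }0<H(Y_B^+)\le H(X_B^+).\end{cases}$$
   Context: An $n\times n$ agreement matrix $B$ has nonnegative entries $B[y][x]$ (row $y$, column $x$), not all zero. A row (column) is non-null if not all of its entries are $0$. For any $n\times n$ matrix $M$ with nonnegative real entries not all zero, let $S_M=\sum_{y,x}M[y][x]$ and define random variables $X_M$ on $\{1,\dots,n\}$ with $P(X_M=x)=\sum_yM[y][x]/S_M$, $Y_M$ with $P(Y_M=y)=\sum_xM[y][x]/S_M$, and the joint variable $X_MY_M$ with $P(X_MY_M=(y,x))=M[y][x]/S_M$. $H$ is Shannon entropy in base 2, defined only when all probabilities are positive. The information agreement is $IA(M)=\frac{H(X_M)+H(Y_M)-H(X_MY_M)}{\min\{H(X_M),H(Y_M)\}}$. For $\epsilon>0$, the $0$-freed matrix $B_\epsilon$ is obtained from $B$ by replacing every zero entry by $\epsilon$, and $IA_\epsilon(B)=\lim_{\epsilon\to0^+}IA(B_\epsilon)$. For a random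 variable $Z$, the refined variable $Z^+$ is $Z$ restricted to values of positive probability, with $H(Z^+)=-\sum_{z:\,p_Z(z)>0}p_Z(z)\log_2p_Z(z)$. *)

From HB Require Import structures.
From mathcomp Require Import all_boot all_order all_algebra.
From mathcomp Require Import all_classical all_reals all_analysis.
Set Implicit Arguments. Unset Strict Implicit. Unset Printing Implicit Defensive.
Import Order.TTheory GRing.Theory Num.Theory.
Import numFieldNormedType.Exports.
Local Open Scope ring_scope.

Section Defs.
Variable R : realType.

Definition log2 (x : R) : R := ln x / ln 2.

(* Shannon entropy (base 2) of a finite distribution p, summing over all values;
   it is only applied where all probabilities are positive. *)
Definition entropy (T : finType) (p : T -> R) : R :=
  - \sum_(t : T) p t * log2 (p t).

(* entropy of the refined variable Z^+ : sum over values of positive probability *)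
Definition entropy_plus (T : finType) (p : T -> R) : R :=
  - \sum_(t : T | 0 < p t) p t * log2 (p t).

Variable n : nat.

(* M y x : row y, column x *)
Definition Ssum (M : 'M[R]_n) : R := \sum_(y < n) \sum_(x < n) M y x.

Definition pX (M : 'M[R]_n) (x : 'I_n) : R := (\sum_(y < n) M y x) / Ssum M.
Definition pY (M : 'M[R]_n) (y : 'I_n) : R := (\sum_(x < n) M y x) / Ssum M.
Definition pXY (M : 'M[R]_n) (yx : 'I_n * 'I_n) : R := M yx.1 yx.2 / Ssum M.

Definition IA (M : 'M[R]_n) : R :=
  (entropy (pX M) + entropy (pY M) - entropy (pXY M))
    / Num.min (entropy (pX M)) (entropy (pY M)).

Definition zero_freed (B : 'M[R]_n) (eps : R) : 'M[R]_n :=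
  \matrix_(y, x) (if B y x == 0 then eps else B y x).

Definition nonnull_cols (B : 'M[R]_n) : nat :=
  #|[set x : 'I_n | [exists y : 'I_n, B y x != 0]]|.
Definition nonnull_rows (B : 'M[R]_n) : nat :=
  #|[set y : 'I_n | [exists x : 'I_n, B y x != 0]]|.

End Defs.

(* Every entropy is [entropy_nat p / ln 2], where [entropy_nat p] sums [negxlnx t = - t ln t].
   When both marginal entropies of [B] are positive, the distributions of [zero_freed B e]
   converge to those of [B] and [negxlnx] is continuous on [[0, +oo)], so [IA] is continuous
   at [e = 0].
   When [H(Y_B) = 0], [B] has a single non-null row [y0] and every entropy of [zero_freed B e]
   is of order [e (- ln e)]: an entry [e] contributes [negxlnx (e / S) ~ e (- ln e) / S],
   whereas the non-null entries of row [y0] only move by [O(e)]. Counting the entries [e],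
   the row entropy is [~ (n - 1) n e (- ln e) / S] and the mutual information is
   [~ (n - 1) (n - l) e (- ln e) / S]. The row entropy is also the smaller marginal entropy
   (asymptotically so when [B] has a single non-null column too), whence the limit
   [(n - l) / n]. The case [H(X_B) = 0] is the transpose of this one. *)

From HB Require Import structures.
From mathcomp Require Import all_boot all_order all_algebra.
From mathcomp Require Import all_classical all_reals all_analysis.
From mathcomp Require Import ring lra.
Set Implicit Arguments. Unset Strict Implicit. Unset Printing Implicit Defensive.
Import Order.TTheory GRing.Theory Num.Theory.
Import numFieldNormedType.Exports.
Local Open Scope classical_set_scope.
Local Open Scope ring_scope.

Section negxlnx.
Variable R : realType.
Implicit Types p q x : R.

(* As [ln 0 = 0], [negxlnx 0 = 0] is also the continuous extension of [- x ln x]. *)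
Definition negxlnx x : R := - (x * ln x).

Lemma negxlnx0 : negxlnx 0 = 0.
Proof. by rewrite /negxlnx mul0r oppr0. Qed.

Lemma negxlnx1 : negxlnx 1 = 0.
Proof. by rewrite /negxlnx ln1 mulr0 oppr0. Qed.

Lemma negxlnx_ge0 x : 0 <= x -> x <= 1 -> 0 <= negxlnx x.
Proof. by move=> x0 x1; rewrite oppr_ge0 mulr_ge0_le0 // ln_le0. Qed.

Lemma negxlnx_gt0 x : 0 < x -> x < 1 -> 0 < negxlnx x.
Proof. by move=> x0 x1; rewrite oppr_gt0 pmulr_rlt0 // ln_lt0 // x0 x1. Qed.

Lemma negxlnx_le_sqrt x : 0 < x -> negxlnx x <= 2 * Num.sqrt x.
Proof.
move=> x0; have s0 : 0 < Num.sqrt x by rewrite sqrtr_gt0.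
have := sqr_sqrtr (ltW x0); move: s0; set s := Num.sqrt x => s0 xE.
have -> : negxlnx x = 2 * (s * (s * ln s^-1)).
  by rewrite /negxlnx -xE lnXn // lnV ?posrE //; ring.
rewrite ler_pM2l // -[leRHS]mulr1 ler_pM2l //.
by rewrite -ler_pdivlMl // mulr1 ltW // ln_sublinear // invr_gt0.
Qed.

Lemma cvg_negxlnx0 : negxlnx x @[x --> 0] --> 0.
Proof.
have sqrt_cvg0 : 2 * Num.sqrt `|x| @[x --> (0 : R)] --> (0 : R).
  rewrite [X in _ --> X](_ : 0 = 2 * Num.sqrt `|0 : R|); last first.
    by rewrite normr0 sqrtr0 mulr0.
  apply: cvgMl_tmp; apply: (cvg_comp _ _ (cvg_norm cvg_id)).
  exact: sqrt_continuous.
apply: (squeeze_cvgr _ (cvg_cst 0) sqrt_cvg0).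
near=> x; have [x0|x0] := leP x 0.
  by rewrite /negxlnx ln0 // mulr0 oppr0 lexx mulr_ge0 ?sqrtr_ge0.
have x1 : x <= 1 by near: x; apply: nbhs0_ltW; exact: ltr01.
by rewrite negxlnx_ge0 ?(ltW x0) //= gtr0_norm ?negxlnx_le_sqrt.
Unshelve. all: end_near. Qed.

Lemma negxlnx_cvg x : 0 <= x -> negxlnx y @[y --> x] --> negxlnx x.
Proof.
rewrite le_eqVlt => /predU1P[<-|x0]; first by rewrite negxlnx0; exact: cvg_negxlnx0.
by apply: cvgN; apply: cvgM; [exact: cvg_id | exact: continuous_ln].
Qed.

(* [negxlnx p - negxlnx q = (p - q) (- ln p) - q (ln p - ln q)], two nonnegative
   terms bounded through [ln t <= t - 1]. *)
Lemma negxlnx_dist_le p q : 0 < q <= p -> p <= 1 ->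
  `|negxlnx p - negxlnx q| <= (p - q) / q.
Proof.
case/andP=> q0 qp p1; have p0 := lt_le_trans q0 qp.
have ln_le_subr1 (t : R) : 0 < t -> ln t <= t - 1.
  by move=> t0; have := @le_ln1Dx R (t - 1); rewrite addrCA subrr addr0; apply; lra.
have lnVp : - ln p <= p^-1 - 1 by rewrite -lnV ?posrE // ln_le_subr1 ?invr_gt0.
have lnpq : ln p - ln q <= p / q - 1 by rewrite -ln_div ?posrE // ln_le_subr1 ?divr_gt0.
have Vpq : p^-1 <= q^-1 by rewrite lef_pV2 ?posrE.
have A0 : 0 <= (p - q) * - ln p by rewrite mulr_ge0 ?subr_ge0 ?oppr_ge0 ?ln_le0.
have A1 : (p - q) * - ln p <= (p - q) / q.
  by apply: ler_wpM2l; [rewrite subr_ge0 | lra].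
have C0 : 0 <= q * (ln p - ln q).
  by apply: mulr_ge0; [exact: ltW | rewrite subr_ge0 ler_ln ?posrE].
have C1 : q * (ln p - ln q) <= p - q.
  have -> : p - q = q * (p / q - 1) by field; rewrite gt_eqF.
  by apply: ler_wpM2l; [exact: ltW |].
have pq : p - q <= (p - q) / q.
  by rewrite ler_pdivlMr // ler_piMr ?subr_ge0 // (le_trans qp p1).
have -> : negxlnx p - negxlnx q = (p - q) * - ln p - q * (ln p - ln q).
  by rewrite /negxlnx; ring.
rewrite ler_norml; apply/andP; split; lra.
Qed.

End negxlnx.

Section entropy_nat.
Variable R : realType.

Definition entropy_nat (T : finType) (p : T -> R) : R := \sum_t negxlnx (p t).

Lemma ln2_gt0 : 0 < ln (2 : R).
Proof. by rewrite ln_gt0 // ltr1n. Qed.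

Lemma entropyE (T : finType) (p : T -> R) : entropy p = entropy_nat p / ln 2.
Proof.
rewrite /entropy /entropy_nat /log2 mulr_suml -sumrN.
by apply: eq_bigr => t _; rewrite mulrA mulNr.
Qed.

Lemma entropy_plusE (T : finType) (p : T -> R) : (forall t, 0 <= p t) ->
  entropy_plus p = entropy_nat p / ln 2.
Proof.
move=> p0; rewrite /entropy_plus /entropy_nat /log2 mulr_suml -sumrN big_mkcond.
apply: eq_bigr => t _; case: ifPn => [_|]; first by rewrite mulrA mulNr.
by rewrite lt_def p0 andbT negbK => /eqP->; rewrite negxlnx0 mul0r.
Qed.

Lemma entropy_plus_entropy (T : finType) (p : T -> R) :
  (forall t, 0 <= p t) -> entropy_plus p = entropy p.
Proof. by move=> p0; rewrite entropy_plusE // entropyE. Qed.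

Lemma entropy_plus_eq0 (T : finType) (p : T -> R) : (forall t, 0 <= p t) ->
  (entropy_plus p == 0) = (entropy_nat p == 0).
Proof. by move=> p0; rewrite entropy_plusE // mulf_eq0 invr_eq0 (gt_eqF ln2_gt0) orbF. Qed.

Lemma entropy_plus_gt0 (T : finType) (p : T -> R) : (forall t, 0 <= p t) ->
  (0 < entropy_plus p) = (0 < entropy_nat p).
Proof. by move=> p0; rewrite entropy_plusE // pmulr_lgt0 // invr_gt0 ln2_gt0. Qed.

Lemma entropy_nat_ge0 (T : finType) (p : T -> R) :
  (forall t, 0 <= p t <= 1) -> 0 <= entropy_nat p.
Proof. by move=> p01; apply: sumr_ge0 => t _; case/andP: (p01 t); apply: negxlnx_ge0. Qed.

Lemma entropy_nat_cvg (T : finType) (U : Type) (F : set_system U) {FF : Filter F}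
    (p : U -> T -> R) (q : T -> R) :
  (forall t, 0 <= q t) -> (forall t, p u t @[u --> F] --> q t) ->
  entropy_nat (p u) @[u --> F] --> entropy_nat q.
Proof.
move=> q0 pq; apply: (@cvg_big R^o) => // [|t _]; first exact: add_continuous.
exact: cvg_comp (pq t) (negxlnx_cvg (q0 t)).
Qed.

Lemma point_mass_of_entropy_nat0 (T : finType) (p : T -> R) :
  (forall t, 0 <= p t) -> \sum_t p t = 1 -> entropy_nat p = 0 ->
  exists t0, forall t, t != t0 -> p t = 0.
Proof.
move=> p0 p_sum1 entropy0.
have p_le1 t : p t <= 1.
  by rewrite -p_sum1 (bigD1 t) //= lerDl sumr_ge0.
have [t0 pt0] : exists t0, 0 < p t0.
  apply/existsP; apply: contraT; rewrite negb_exists => /forallP p_le0.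
  move: p_sum1; rewrite big1 => [/eqP|t _]; first by rewrite eq_sym oner_eq0.
  by apply/eqP; rewrite eq_le p0 andbT leNgt p_le0.
have pt01 : p t0 = 1.
  apply/eqP; rewrite eq_le p_le1 leNgt; apply/negP => pt1.
  move/eqP: entropy0; rewrite psumr_eq0 => [/allP/(_ t0 (mem_index_enum _))|t _].
    by rewrite implyTb gt_eqF // negxlnx_gt0.
  exact: negxlnx_ge0.
have rest0 : \sum_(t | t != t0) p t = 0.
  by move: p_sum1; rewrite (bigD1 t0) //= pt01; lra.
exists t0 => t tt0; move/eqP: rest0; rewrite psumr_eq0 // => /allP.
by move=> /(_ t (mem_index_enum _)); rewrite tt0 => /eqP.
Qed.

End entropy_nat.

Section small_scale.
Variable R : realType.

Lemma near0_in_unit : \forall e \near (0 : R)^'+, 0 < e < 1.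
Proof.
near=> e; apply/andP; split; near: e; [exact: nbhs_right_gt | exact: nbhs_right_lt].
Unshelve. all: end_near. Qed.

Lemma near0_xlnx_gt0 : \forall e \near (0 : R)^'+, 0 < e * - ln e.
Proof.
near=> e; have /andP[e0 e1] : 0 < e < 1 by near: e; exact: near0_in_unit.
by rewrite mulr_gt0 // oppr_gt0 ln_lt0 // e0.
Unshelve. all: end_near. Qed.

Lemma cvg_lnV0 : (ln e)^-1 @[e --> (0 : R)^'+] --> 0.
Proof.
apply/ltr0_cvgV0; last exact: lnNy.
near=> e; have /andP[e0 e1] : 0 < e < 1 by near: e; exact: near0_in_unit.
by rewrite ln_lt0 // e0.
Unshelve. all: end_near. Qed.

Lemma cvg_negxlnx_div_scaled (s : R -> R) (S : R) : 0 < S ->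
  s e @[e --> 0^'+] --> S ->
  negxlnx (e / s e) / (e * - ln e) @[e --> 0^'+] --> S^-1.
Proof.
move=> S0 sS.
apply: (cvg_trans _ (_ : (s e)^-1 - (s e)^-1 * ln (s e) * (ln e)^-1 @[e --> 0^'+] --> _)).
  apply: near_eq_cvg; near=> e.
  have /andP[e0 e1] : 0 < e < 1 by near: e; exact: near0_in_unit.
  have se0 : 0 < s e by near: e; exact: (cvgr_gt _ sS).
  have lne : ln e != 0 by rewrite lt_eqF // ln_lt0 // e0.
  by rewrite /negxlnx ln_div ?posrE //; field; rewrite lne !gt_eqF.
have -> : S^-1 = S^-1 - S^-1 * ln S * 0 by rewrite mulr0 subr0.
have sV := cvgV (lt0r_neq0 S0) sS.
apply: cvgB; first exact: sV.
apply: cvgM; last exact: cvg_lnV0.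
apply: cvgM; first exact: sV.
exact: cvg_comp sS (continuous_ln S0).
Unshelve. all: end_near. Qed.

Lemma cvg_scaled_bigO (E : R -> R) (K : R) :
  (\forall e \near 0^'+, `|E e| <= K * e) ->
  E e / (e * - ln e) @[e --> 0^'+] --> 0.
Proof.
move=> EK; have KV : K * (ln e)^-1 @[e --> (0 : R)^'+] --> 0.
  by have := cvgMl_tmp (a := K) cvg_lnV0; rewrite mulr0; exact.
have KVN := cvgN KV; rewrite oppr0 in KVN.
apply: (@squeeze_cvgr _ _ _ _ (fun e => K * (ln e)^-1) (fun e => - (K * (ln e)^-1))) KV _;
  last exact: KVN.
near=> e; have /andP[e0 e1] : 0 < e < 1 by near: e; exact: near0_in_unit.
have phi0 : 0 < e * - ln e by near: e; exact: near0_xlnx_gt0.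
have lne : ln e != 0 by rewrite lt_eqF // ln_lt0 // e0.
have -> : K * (ln e)^-1 = - (K * e / (e * - ln e)) by field; rewrite lne gt_eqF.
rewrite opprK -ler_norml normrM normfV (gtr0_norm phi0) ler_pM2r ?invr_gt0 //.
by near: e.
Unshelve. all: end_near. Qed.

Lemma cvg_xlnx0 : e * - ln e @[e --> (0 : R)^'+] --> 0.
Proof.
have -> : (fun e => e * - ln e) = @negxlnx R by apply/funext => e; rewrite mulrN.
exact: cvg_at_right_filter (@cvg_negxlnx0 R).
Qed.

End small_scale.

Lemma cvg_div_scaled (R : realType) (T : Type) (F : set_system T) {FF : Filter F}
    (f g s : T -> R) (a b : R) :
  b != 0 -> (\forall t \near F, s t != 0) ->
  f t / s t @[t --> F] --> a -> g t / s t @[t --> F] --> b ->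
  f t / g t @[t --> F] --> a / b.
Proof.
move=> b0 s0 fa gb; apply: (cvg_trans _ (cvgM fa (cvgV b0 gb))).
apply: near_eq_cvg; near=> t.
rewrite -[LHS]/(f t / s t / (g t / s t)) invf_div mulrA divfK //.
by near: t.
Unshelve. all: end_near. Qed.

Section agreement_matrix.
Variables (R : realType) (n : nat).
Implicit Types (B M : 'M[R]_n) (e : R).

Definition mutual_info_nat M : R :=
  entropy_nat (pX M) + entropy_nat (pY M) - entropy_nat (pXY M).

Lemma IAE M : IA M =
  mutual_info_nat M / Num.min (entropy_nat (pX M)) (entropy_nat (pY M)).
Proof.
have ln2_neq0 : ln (2 : R) != 0 by rewrite gt_eqF // ln2_gt0.
rewrite /IA !entropyE -minr_pMl ?invr_ge0 ?ltW ?ln2_gt0 // /mutual_info_nat.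
set m := Num.min _ _; have [->|m0] := eqVneq m 0; first by rewrite !(mul0r, invr0, mulr0).
by field; apply/andP; split.
Qed.

Lemma zero_freed_eq0 B e y x : B y x = 0 -> zero_freed B e y x = e.
Proof. by move=> Byx; rewrite mxE Byx eqxx. Qed.

Lemma zero_freed_neq0 B e y x : B y x != 0 -> zero_freed B e y x = B y x.
Proof. by move=> Byx; rewrite mxE (negbTE Byx). Qed.

Lemma zero_freed_ge B e y x : 0 <= e -> B y x <= zero_freed B e y x.
Proof. by move=> e0; rewrite mxE; case: eqP => [->|]. Qed.

Lemma zero_freed_gt0 B e y x : (forall y x, 0 <= B y x) -> 0 < e ->
  0 < zero_freed B e y x.
Proof. by move=> B0 e0; rewrite mxE; case: eqP => // /eqP Byx; rewrite lt_def Byx B0. Qed.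

Lemma zero_freedT B e : zero_freed B^T e = (zero_freed B e)^T.
Proof. by apply/matrixP => y x; rewrite !mxE. Qed.

Lemma cvg_zero_freed B y x : zero_freed B e y x @[e --> 0^'+] --> B y x.
Proof.
under eq_cvg do rewrite mxE.
by case: eqP => [->|_]; [exact: cvg_at_right_filter cvg_id | exact: cvg_cst].
Qed.

Lemma Ssum_ge0 B : (forall y x, 0 <= B y x) -> 0 <= Ssum B.
Proof. by move=> B0; apply: sumr_ge0 => y _; apply: sumr_ge0. Qed.

Lemma Ssum_gt0 B : (forall y x, 0 <= B y x) -> (exists y x, B y x != 0) -> 0 < Ssum B.
Proof.
move=> B0 [y [x Byx]]; apply: lt_le_trans (_ : 0 < B y x) _; first by rewrite lt_def Byx B0.
rewrite /Ssum (bigD1 y) //= (bigD1 x) //= -addrA lerDl.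
by rewrite addr_ge0 ?sumr_ge0 // => *; rewrite ?sumr_ge0.
Qed.

Lemma SsumT M : Ssum M^T = Ssum M.
Proof.
by rewrite /Ssum exchange_big; apply: eq_bigr => y _; apply: eq_bigr => x _; rewrite mxE.
Qed.

Lemma pXT M : pX M^T = pY M.
Proof. by apply: funext => x; rewrite /pX /pY SsumT; under eq_bigr do rewrite mxE. Qed.

Lemma pYT M : pY M^T = pX M.
Proof. by apply: funext => x; rewrite /pX /pY SsumT; under eq_bigr do rewrite mxE. Qed.

Lemma entropy_nat_pXYT M : entropy_nat (pXY M^T) = entropy_nat (pXY M).
Proof.
rewrite /entropy_nat /pXY SsumT -!(pair_bigA _ (fun y x => negxlnx (_ y x / Ssum M))) /=.
by rewrite exchange_big; apply: eq_bigr => y _; apply: eq_bigr => x _; rewrite mxE.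
Qed.

Lemma mutual_info_natT M : mutual_info_nat M^T = mutual_info_nat M.
Proof. by rewrite /mutual_info_nat pXT pYT entropy_nat_pXYT (addrC (entropy_nat (pY M))). Qed.

Lemma IAT M : IA M^T = IA M.
Proof. by rewrite !IAE mutual_info_natT pXT pYT minC. Qed.

Lemma nonnull_colsT B : nonnull_cols B^T = nonnull_rows B.
Proof.
apply: eq_card => x; rewrite !inE.
by apply/existsP/existsP => -[y Byx]; exists y; move: Byx; rewrite mxE.
Qed.

Section nonneg.
Variable B : 'M[R]_n.
Hypothesis B0 : forall y x, 0 <= B y x.

Lemma pX_ge0 x : 0 <= pX B x.
Proof. by apply: divr_ge0; [apply: sumr_ge0 | exact: Ssum_ge0]. Qed.

Lemma pY_ge0 y : 0 <= pY B y.
Proof. by apply: divr_ge0; [apply: sumr_ge0 | exact: Ssum_ge0]. Qed.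

Lemma pXY_ge0 yx : 0 <= pXY B yx.
Proof. by apply: divr_ge0; [| exact: Ssum_ge0]. Qed.

Hypothesis S0 : Ssum B != 0.

Lemma sum_pY : \sum_y pY B y = 1.
Proof. by rewrite /pY -mulr_suml divff. Qed.

Lemma pY_le1 y : pY B y <= 1.
Proof. by rewrite -sum_pY (bigD1 y) //= lerDl sumr_ge0 // => *; apply: pY_ge0. Qed.

Lemma pY_eq0 y : pY B y = 0 -> forall x, B y x = 0.
Proof.
move/eqP; rewrite mulf_eq0 invr_eq0 (negbTE S0) orbF psumr_eq0 // => /allP Bx0 x.
exact/eqP/(implyP (Bx0 x (mem_index_enum _))).
Qed.

Lemma entropy_plus_pY_ge0 : 0 <= entropy_plus (pY B).
Proof.
rewrite entropy_plusE; last exact: pY_ge0.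
apply: divr_ge0; last exact/ltW/ln2_gt0.
by apply: entropy_nat_ge0 => y; rewrite pY_ge0 // pY_le1.
Qed.

Lemma single_row_of_entropy_nat_pY0 : entropy_nat (pY B) = 0 ->
  exists y0, forall y, y != y0 -> forall x, B y x = 0.
Proof.
move/(point_mass_of_entropy_nat0 pY_ge0 sum_pY) => [y0 py0]; exists y0 => y yy0.
exact/pY_eq0/py0.
Qed.

Lemma cvg_Ssum_zero_freed : Ssum (zero_freed B e) @[e --> 0^'+] --> Ssum B.
Proof.
apply: (@cvg_big R^o) => // [|y _]; first exact: add_continuous.
apply: (@cvg_big R^o) => // [|x _]; first exact: add_continuous.
exact: cvg_zero_freed.
Qed.

Lemma cvg_entropy_nat_pX_zero_freed :
  entropy_nat (pX (zero_freed B e)) @[e --> 0^'+] --> entropy_nat (pX B).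
Proof.
apply: entropy_nat_cvg pX_ge0 _ => x; apply: cvgM; last exact: cvgV S0 cvg_Ssum_zero_freed.
by apply: (@cvg_big R^o) => // [|y _]; [exact: add_continuous | exact: cvg_zero_freed].
Qed.

Lemma cvg_entropy_nat_pY_zero_freed :
  entropy_nat (pY (zero_freed B e)) @[e --> 0^'+] --> entropy_nat (pY B).
Proof.
apply: entropy_nat_cvg pY_ge0 _ => y; apply: cvgM; last exact: cvgV S0 cvg_Ssum_zero_freed.
by apply: (@cvg_big R^o) => // [|x _]; [exact: add_continuous | exact: cvg_zero_freed].
Qed.

Lemma cvg_entropy_nat_pXY_zero_freed :
  entropy_nat (pXY (zero_freed B e)) @[e --> 0^'+] --> entropy_nat (pXY B).
Proof.
apply: entropy_nat_cvg pXY_ge0 _ => yx; apply: cvgM; last exact: cvgV S0 cvg_Ssum_zero_freed.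
exact: cvg_zero_freed.
Qed.

Lemma cvg_IA_zero_freed :
  0 < Num.min (entropy_nat (pX B)) (entropy_nat (pY B)) ->
  IA (zero_freed B e) @[e --> 0^'+] --> IA B.
Proof.
move=> min_gt0; under eq_cvg do rewrite IAE; rewrite IAE.
apply: cvgM; first by apply: cvgB; first apply: cvgD;
  [exact: cvg_entropy_nat_pX_zero_freed | exact: cvg_entropy_nat_pY_zero_freed |
   exact: cvg_entropy_nat_pXY_zero_freed].
apply: cvgV; first by rewrite gt_eqF.
apply: continuous2_cvg cvg_entropy_nat_pX_zero_freed cvg_entropy_nat_pY_zero_freed.
exact: (@min_continuous _ R^o (_, _)).
Qed.

End nonneg.

Lemma trmx_ge0 B : (forall y x, 0 <= B y x) -> forall y x, 0 <= B^T y x.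
Proof. by move=> B0 y x; rewrite mxE. Qed.

Lemma pX_le1 B x : (forall y x, 0 <= B y x) -> Ssum B != 0 -> pX B x <= 1.
Proof.
by move=> B0 S0; rewrite -pYT; apply: pY_le1; [exact: trmx_ge0 | rewrite SsumT].
Qed.

Lemma entropy_plus_pX_ge0 B : (forall y x, 0 <= B y x) -> Ssum B != 0 ->
  0 <= entropy_plus (pX B).
Proof.
by move=> B0 S0; rewrite -pYT; apply: entropy_plus_pY_ge0; [exact: trmx_ge0 | rewrite SsumT].
Qed.

Lemma entropy_plus_pXYT B : (forall y x, 0 <= B y x) ->
  entropy_plus (pXY B^T) = entropy_plus (pXY B).
Proof.
move=> B0; rewrite !entropy_plusE ?entropy_nat_pXYT // => yx; apply: pXY_ge0 => //.
exact: trmx_ge0.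
Qed.

Lemma IA_zero_freedT B :
  (fun e => IA (zero_freed B^T e)) = (fun e => IA (zero_freed B e)).
Proof. by apply/funext => e; rewrite zero_freedT IAT. Qed.

End agreement_matrix.

Section single_row.
Variables (R : realType) (n : nat) (B : 'M[R]_n) (y0 : 'I_n).
Hypothesis B0 : forall y x, 0 <= B y x.
Hypothesis B_single_row : forall y, y != y0 -> forall x, B y x = 0.

Local Notation M e := (zero_freed B e).
Local Notation row0 e := (\sum_x zero_freed B e y0 x).
Local Notation Se e := (Ssum (zero_freed B e)).
Local Notation l := (nonnull_cols B).
Local Notation nonnull_part e := (\sum_(x | B y0 x != 0)
  (negxlnx ((B y0 x + n.-1%:R * e) / Se e) - negxlnx (B y0 x / Se e))).

Lemma n_gt0 : (0 < n)%N.
Proof. exact: leq_ltn_trans (leq0n _) (ltn_ord y0). Qed.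

Lemma sum_off_row (c : R) : \sum_(y | y != y0) c = n.-1%:R * c.
Proof. by rewrite sumr_const cardC1 card_ord mulr_natl. Qed.

Lemma zero_freed_off_row e y x : y != y0 -> M e y x = e.
Proof. by move=> yy0; rewrite zero_freed_eq0 ?B_single_row. Qed.

Lemma Ssum_single_row : Ssum B = \sum_x B y0 x.
Proof.
rewrite /Ssum (bigD1 y0) //= [X in _ + X]big1 ?addr0 // => y yy0.
by rewrite big1 // => x _; rewrite B_single_row.
Qed.

Lemma Ssum_zero_freed_single_row e : Se e = row0 e + n.-1%:R * (n%:R * e).
Proof.
rewrite /Ssum (bigD1 y0) //= -sum_off_row; congr (_ + _); apply: eq_bigr => y yy0.
rewrite (eq_bigr (fun=> e)) ?sumr_const ?card_ord ?mulr_natl // => x _.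
exact: zero_freed_off_row.
Qed.

Lemma Ssum_le_row0 e : 0 <= e -> Ssum B <= row0 e.
Proof. by move=> e0; rewrite Ssum_single_row; apply: ler_sum => x _; apply: zero_freed_ge. Qed.

Lemma Ssum_le_zero_freed e : 0 <= e -> Ssum B <= Se e.
Proof.
move=> e0; rewrite Ssum_zero_freed_single_row (le_trans (Ssum_le_row0 e0)) //.
by rewrite lerDl !mulr_ge0.
Qed.

Lemma nonnull_cols_single_row : l = #|[set x | B y0 x != 0]%SET|.
Proof.
apply: eq_card => x; rewrite !inE; apply/existsP/idP => [[y Byx]|Bx]; last by exists y0.
by have [<-|yy0] := eqVneq y y0; rewrite // B_single_row ?eqxx in Byx.
Qed.

Lemma card_null_row0 : #|[pred x | B y0 x == 0]| = (n - l)%N.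
Proof.
rewrite nonnull_cols_single_row -[n in (n - _)%N]card_ord -(cardC [set x | B y0 x != 0]%SET).
by rewrite addKn; apply: eq_card => x; rewrite !inE negbK.
Qed.

Lemma entropy_nat_pY_single_row e : entropy_nat (pY (M e)) =
  negxlnx (row0 e / Se e) + n.-1%:R * negxlnx (n%:R * e / Se e).
Proof.
rewrite /entropy_nat (bigD1 y0) //= -sum_off_row; congr (_ + _); apply: eq_bigr => y yy0.
rewrite /pY (eq_bigr (fun=> e)) ?sumr_const ?card_ord ?mulr_natl // => x _.
exact: zero_freed_off_row.
Qed.

(* The column sums are the entries of row [y0] shifted by [(n - 1) e], and the
   [(n - 1) n] entries [e] off row [y0] give the [negxlnx (e / Se e)] term of [pXY]. *)
Lemma mutual_info_nat_single_row e : mutual_info_nat (M e) =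
  nonnull_part e + (n - l)%:R * (negxlnx (n%:R * e / Se e) - negxlnx (e / Se e))
  - (n.-1 * n)%:R * negxlnx (e / Se e) + entropy_nat (pY (M e)).
Proof.
have col_sum x : \sum_y M e y x = M e y0 x + n.-1%:R * e.
  rewrite (bigD1 y0) //= -sum_off_row; congr (_ + _).
  by apply: eq_bigr => y yy0; rewrite zero_freed_off_row.
have HXY : entropy_nat (pXY (M e)) =
    \sum_x negxlnx (M e y0 x / Se e) + (n.-1 * n)%:R * negxlnx (e / Se e).
  rewrite /entropy_nat /pXY -(pair_bigA _ (fun y x => negxlnx (M e y x / Se e))) /=.
  rewrite (bigD1 y0) //= natrM -mulrA -sum_off_row; congr (_ + _); apply: eq_bigr => y yy0.
  rewrite (eq_bigr (fun=> negxlnx (e / Se e))) ?sumr_const ?card_ord ?mulr_natl // => x _.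
  by rewrite zero_freed_off_row.
have HX : entropy_nat (pX (M e)) - \sum_x negxlnx (M e y0 x / Se e) =
    nonnull_part e + (n - l)%:R * (negxlnx (n%:R * e / Se e) - negxlnx (e / Se e)).
  rewrite /entropy_nat /pX -sumrB (bigID (fun x => B y0 x != 0)) /=; congr (_ + _).
    by apply: eq_bigr => x Bx; rewrite col_sum zero_freed_neq0.
  have nE : n%:R * e = e + n.-1%:R * e by rewrite -{1}(prednK n_gt0) -natr1; ring.
  rewrite -card_null_row0 mulr_natl -sumr_const.
  apply: eq_big => [x|x /negPn/eqP Bx]; first by rewrite inE negbK.
  by rewrite col_sum zero_freed_eq0 // nE.
rewrite /mutual_info_nat HXY; lra.
Qed.

Hypothesis S0 : 0 < Ssum B.

Lemma negxlnx_row0_bound e : 0 < e ->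
  `|negxlnx (row0 e / Se e)| <= (n.-1 * n)%:R / Ssum B * e.
Proof.
move=> e0; have S_row0 := Ssum_le_row0 (ltW e0).
have row0_gt0 := lt_le_trans S0 S_row0.
have Se_gt0 := lt_le_trans S0 (Ssum_le_zero_freed (ltW e0)).
have c_ge0 : 0 <= n.-1%:R * (n%:R * e) :> R by rewrite !mulr_ge0 // ltW.
have q_le1 : row0 e / Se e <= 1.
  by rewrite ler_pdivrMr // mul1r Ssum_zero_freed_single_row lerDl.
have -> : `|negxlnx (row0 e / Se e)| = `|negxlnx 1 - negxlnx (row0 e / Se e)|.
  by rewrite negxlnx1 distrC subr0.
apply: le_trans (negxlnx_dist_le _ (lexx 1)) _; first by rewrite divr_gt0 // q_le1.
have -> : (1 - row0 e / Se e) / (row0 e / Se e) = n.-1%:R * (n%:R * e) / row0 e.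
  rewrite -[in RHS](addKr (row0 e) (n.-1%:R * (n%:R * e))) -Ssum_zero_freed_single_row.
  by field; rewrite !gt_eqF.
rewrite natrM (_ : _ / _ * e = n.-1%:R * (n%:R * e) / Ssum B); last by ring.
by apply: ler_wpM2l => //; rewrite lef_pV2 ?posrE.
Qed.

Lemma nonnull_part_bound e : 0 < e ->
  `|nonnull_part e| <= (\sum_(x | B y0 x != 0) n.-1%:R / B y0 x) * e.
Proof.
move=> e0; have Se_gt0 := lt_le_trans S0 (Ssum_le_zero_freed (ltW e0)).
apply: le_trans (ler_norm_sum _ _ _) _; rewrite mulr_suml; apply: ler_sum => x Bx.
have Bx_gt0 : 0 < B y0 x by rewrite lt_def Bx B0.
have ne_ge0 : 0 <= n.-1%:R * e :> R by rewrite mulr_ge0 // ltW.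
have Bx_row0 : B y0 x <= row0 e.
  rewrite (bigD1 x) //= zero_freed_neq0 // lerDl sumr_ge0 // => x' _.
  exact/ltW/zero_freed_gt0.
have q_gt0 : 0 < B y0 x / Se e by rewrite divr_gt0.
have q_le_p : B y0 x / Se e <= (B y0 x + n.-1%:R * e) / Se e.
  by rewrite ler_pM2r ?invr_gt0 // lerDl.
have p_le1 : (B y0 x + n.-1%:R * e) / Se e <= 1.
  rewrite ler_pdivrMr // mul1r Ssum_zero_freed_single_row lerD //.
  apply: ler_wpM2l => //; apply: ler_peMl; [exact: ltW | by rewrite ler1n n_gt0].
apply: le_trans (negxlnx_dist_le _ p_le1) _; first by rewrite q_gt0 q_le_p.
have -> : ((B y0 x + n.-1%:R * e) / Se e - B y0 x / Se e) / (B y0 x / Se e) =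
    n.-1%:R / B y0 x * e by field; rewrite !gt_eqF.
exact: lexx.
Qed.

Lemma cvg_negxlnx_eps :
  negxlnx (e / Se e) / (e * - ln e) @[e --> 0^'+] --> (Ssum B)^-1.
Proof.
exact: (cvg_negxlnx_div_scaled (s := fun e => Se e) S0 (cvg_Ssum_zero_freed (B := B))).
Qed.

Lemma cvg_negxlnx_neps :
  negxlnx (n%:R * e / Se e) / (e * - ln e) @[e --> 0^'+] --> n%:R / Ssum B.
Proof.
have n0 : 0 < n%:R :> R by rewrite ltr0n n_gt0.
under eq_cvg do rewrite [n%:R * _]mulrC -mulrA -[n%:R / _]invf_div.
rewrite -[n%:R / _]invf_div; apply: (cvg_negxlnx_div_scaled (s := fun e => Se e / n%:R)).
  by rewrite divr_gt0.
by apply: cvgMr_tmp; exact: cvg_Ssum_zero_freed.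
Qed.

Lemma cvg_entropy_nat_pY_single_row :
  entropy_nat (pY (M e)) / (e * - ln e) @[e --> 0^'+] --> (n.-1 * n)%:R / Ssum B.
Proof.
under eq_cvg do rewrite entropy_nat_pY_single_row mulrDl -mulrA.
have -> : (n.-1 * n)%:R / Ssum B = 0 + n.-1%:R * (n%:R / Ssum B).
  by rewrite add0r natrM mulrA.
apply: cvgD; last first.
  by apply: cvgMl_tmp; exact: cvg_negxlnx_neps.
apply: (@cvg_scaled_bigO _ _ ((n.-1 * n)%:R / Ssum B)); near=> e.
by apply: negxlnx_row0_bound; near: e; exact: nbhs_right_gt.
Unshelve. all: end_near. Qed.

Lemma cvg_entropy_nat_pY_single_row0 : entropy_nat (pY (M e)) @[e --> 0^'+] --> 0.
Proof.
have HY_phi : entropy_nat (pY (M e)) / (e * - ln e) * (e * - ln e) @[e --> 0^'+] --> 0.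
  by have := cvgM cvg_entropy_nat_pY_single_row (@cvg_xlnx0 R); rewrite mulr0; exact.
apply: (cvg_trans _ HY_phi); apply: near_eq_cvg; near=> e.
by rewrite divfK // gt_eqF //; near: e; exact: near0_xlnx_gt0.
Unshelve. all: end_near. Qed.

Lemma cvg_mutual_info_nat_single_row :
  mutual_info_nat (M e) / (e * - ln e) @[e --> 0^'+] --> (n.-1 * (n - l))%:R / Ssum B.
Proof.
have scaledE e : mutual_info_nat (M e) / (e * - ln e) =
    nonnull_part e / (e * - ln e)
    + (n - l)%:R * (negxlnx (n%:R * e / Se e) / (e * - ln e)
                    - negxlnx (e / Se e) / (e * - ln e))
    - (n.-1 * n)%:R * (negxlnx (e / Se e) / (e * - ln e))
    + entropy_nat (pY (M e)) / (e * - ln e).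
  by rewrite mutual_info_nat_single_row; ring.
under eq_cvg do rewrite scaledE.
have -> : (n.-1 * (n - l))%:R / Ssum B = 0 + (n - l)%:R * (n%:R / Ssum B - (Ssum B)^-1)
    - (n.-1 * n)%:R * (Ssum B)^-1 + (n.-1 * n)%:R / Ssum B.
  have nE : n%:R = n.-1%:R + 1 :> R by rewrite natr1 prednK // n_gt0.
  by rewrite !natrM nE; ring.
apply: cvgD; last exact: cvg_entropy_nat_pY_single_row.
apply: cvgB; last by apply: cvgMl_tmp; exact: cvg_negxlnx_eps.
apply: cvgD.
  apply: (@cvg_scaled_bigO _ _ (\sum_(x | B y0 x != 0) n.-1%:R / B y0 x)); near=> e.
  by apply: nonnull_part_bound; near: e; exact: nbhs_right_gt.
by apply: cvgMl_tmp; apply: cvgB; [exact: cvg_negxlnx_neps | exact: cvg_negxlnx_eps].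
Unshelve. all: end_near. Qed.

End single_row.

Lemma cvg_minr_entropy_nat_single_row
    (R : realType) (n : nat) (B : 'M[R]_n) (y0 : 'I_n) :
  (forall y x, 0 <= B y x) -> (forall y, y != y0 -> forall x, B y x = 0) ->
  0 < Ssum B ->
  Num.min (entropy_nat (pX (zero_freed B e))) (entropy_nat (pY (zero_freed B e)))
    / (e * - ln e) @[e --> 0^'+] --> (n.-1 * n)%:R / Ssum B.
Proof.
move=> B0 B_single_row S0.
have HY := cvg_entropy_nat_pY_single_row B_single_row S0.
(* Either [B] also has a single non-null column, so that both entropies have the same
   asymptotics, or the column entropy stays away from [0] while the row entropy vanishes. *)
have [HX0|HX_neq0] := eqVneq (entropy_nat (pX B)) 0.
  have ST0 : 0 < Ssum B^T by rewrite SsumT.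
  have [x0 BT_single_row] : exists x0, forall x, x != x0 -> forall y, B^T x y = 0.
    apply: single_row_of_entropy_nat_pY0; first exact: trmx_ge0.
      by rewrite gt_eqF.
    by rewrite pYT.
  have HX : entropy_nat (pX (zero_freed B e)) / (e * - ln e) @[e --> 0^'+] -->
      (n.-1 * n)%:R / Ssum B.
    move: (cvg_entropy_nat_pY_single_row BT_single_row ST0).
    by rewrite SsumT; under eq_cvg do rewrite zero_freedT pYT.
  apply: cvg_trans (_ : Num.min (entropy_nat (pX (zero_freed B e)) / (e * - ln e))
      (entropy_nat (pY (zero_freed B e)) / (e * - ln e)) @[e --> 0^'+] --> _).
    apply: near_eq_cvg; near=> e; rewrite minr_pMl // invr_ge0 ltW //.
    by near: e; exact: near0_xlnx_gt0.
  rewrite -[X in _ --> X]minxx.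
  by apply: continuous2_cvg HX HY; exact: (@min_continuous _ R^o (_, _)).
have S_neq0 : Ssum B != 0 by rewrite gt_eqF.
have HX_gt0 : 0 < entropy_nat (pX B).
  by rewrite lt_def HX_neq0 entropy_nat_ge0 // => x; rewrite pX_ge0 // pX_le1.
have HY0 := cvg_entropy_nat_pY_single_row0 B_single_row S0.
apply: (cvg_trans _ HY); apply: near_eq_cvg; near=> e; rewrite min_r // ltW //.
apply: (@lt_trans _ _ (entropy_nat (pX B) / 2)); near: e.
  by apply: (cvgr_lt _ HY0); rewrite divr_gt0.
apply: (cvgr_gt _ (cvg_entropy_nat_pX_zero_freed B0 S_neq0)).
by rewrite ltr_pdivrMr // ltr_pMr // ltr1n.
Unshelve. all: end_near. Qed.

Lemma cvg_IA_single_row (R : realType) (n : nat) (B : 'M[R]_n) (y0 : 'I_n) :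
  (2 <= n)%N -> (forall y x, 0 <= B y x) ->
  (forall y, y != y0 -> forall x, B y x = 0) -> 0 < Ssum B ->
  IA (zero_freed B e) @[e --> 0^'+] --> ((n%:R - (nonnull_cols B)%:R) / n%:R : R).
Proof.
move=> n2 B0 B_single_row S0.
have n_neq0 : n%:R != 0 :> R by rewrite pnatr_eq0 -lt0n (leq_trans _ n2).
have n1_neq0 : n.-1%:R != 0 :> R.
  by rewrite pnatr_eq0 -lt0n -ltnS prednK // (leq_trans _ n2).
have l_le_n : (nonnull_cols B <= n)%N by rewrite -[X in (_ <= X)%N]card_ord max_card.
have -> : (n%:R - (nonnull_cols B)%:R) / n%:R =
    (n.-1 * (n - nonnull_cols B))%:R / Ssum B / ((n.-1 * n)%:R / Ssum B).
  by rewrite !natrM natrB //; field; rewrite n_neq0 n1_neq0 gt_eqF.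
have c_neq0 : (n.-1 * n)%:R / Ssum B != 0.
  by apply: mulf_neq0; [rewrite natrM mulf_neq0 | rewrite invr_eq0 gt_eqF].
have phi_neq0 : \forall e \near (0 : R)^'+, e * - ln e != 0.
  by near=> e; rewrite gt_eqF //; near: e; exact: near0_xlnx_gt0.
under eq_cvg do rewrite IAE.
exact: (cvg_div_scaled c_neq0 phi_neq0
  (cvg_mutual_info_nat_single_row B0 B_single_row S0)
  (cvg_minr_entropy_nat_single_row B0 B_single_row S0)).
Unshelve. all: end_near. Qed.

Section limits.
Variables (R : realType) (n : nat) (B : 'M[R]_n).
Hypothesis B0 : forall y x, 0 <= B y x.
Hypothesis S0 : 0 < Ssum B.

Lemma cvg_IA_entropy_plus_pY0 : (2 <= n)%N -> entropy_plus (pY B) = 0 ->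
  IA (zero_freed B e) @[e --> 0^'+] --> ((n%:R - (nonnull_cols B)%:R) / n%:R : R).
Proof.
move=> n2 /eqP; rewrite entropy_plus_eq0; last exact: pY_ge0.
have S_neq0 : Ssum B != 0 by rewrite gt_eqF.
move=> /eqP /(single_row_of_entropy_nat_pY0 B0 S_neq0) [y0 B_single_row].
exact: (cvg_IA_single_row n2 B0 B_single_row S0).
Qed.

Lemma cvg_IA_entropy_plus_le :
  0 < entropy_plus (pX B) <= entropy_plus (pY B) ->
  IA (zero_freed B e) @[e --> 0^'+] -->
  1 + (entropy_plus (pY B) - entropy_plus (pXY B)) / entropy_plus (pX B).
Proof.
case/andP=> HX_gt0 HX_le_HY.
have -> : 1 + (entropy_plus (pY B) - entropy_plus (pXY B)) / entropy_plus (pX B) = IA B.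
  rewrite /IA -!entropy_plus_entropy;
    try by [exact: pX_ge0 | exact: pY_ge0 | exact: pXY_ge0].
  by rewrite min_l //; field; exact: lt0r_neq0.
apply: (cvg_IA_zero_freed B0); first by rewrite gt_eqF.
rewrite lt_min -!entropy_plus_gt0; try by [exact: pX_ge0 | exact: pY_ge0].
by rewrite HX_gt0 (lt_le_trans HX_gt0).
Qed.

End limits.

Lemma cvg_IA_entropy_plus_pX0 (R : realType) (n : nat) (B : 'M[R]_n) :
  (forall y x, 0 <= B y x) -> 0 < Ssum B -> (2 <= n)%N -> entropy_plus (pX B) = 0 ->
  IA (zero_freed B e) @[e --> 0^'+] --> ((n%:R - (nonnull_rows B)%:R) / n%:R : R).
Proof.
move=> B0 S0 n2; rewrite -pYT => HX0.
have ST0 : 0 < Ssum B^T by rewrite SsumT.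
by have := cvg_IA_entropy_plus_pY0 (trmx_ge0 B0) ST0 n2 HX0; rewrite IA_zero_freedT nonnull_colsT.
Qed.

Lemma cvg_IA_entropy_plus_ge (R : realType) (n : nat) (B : 'M[R]_n) :
  (forall y x, 0 <= B y x) -> 0 < Ssum B ->
  0 < entropy_plus (pY B) <= entropy_plus (pX B) ->
  IA (zero_freed B e) @[e --> 0^'+] -->
  1 + (entropy_plus (pX B) - entropy_plus (pXY B)) / entropy_plus (pY B).
Proof.
move=> B0 S0; rewrite -pXT -[pX B]pYT -(entropy_plus_pXYT B0) => HYX.
have ST0 : 0 < Ssum B^T by rewrite SsumT.
by have := cvg_IA_entropy_plus_le (trmx_ge0 B0) ST0 HYX; rewrite IA_zero_freedT.
Qed.

Theorem corollary1 (R : realType) (n : nat) (B : 'M[R]_n) :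
  (2 <= n)%N ->
  (forall y x, 0 <= B y x) ->
  (exists y x, B y x != 0) ->
  let l := nonnull_cols B in
  let m := nonnull_rows B in
  let HX := entropy_plus (pX B) in
  let HY := entropy_plus (pY B) in
  let HXY := entropy_plus (pXY B) in
  cvg (IA (zero_freed B e) @[e --> 0^'+]) /\
  (HY = 0 -> IA (zero_freed B e) @[e --> 0^'+] --> ((n%:R - l%:R) / n%:R : R)) /\
  (HX = 0 -> IA (zero_freed B e) @[e --> 0^'+] --> ((n%:R - m%:R) / n%:R : R)) /\
  (0 < HX <= HY -> IA (zero_freed B e) @[e --> 0^'+] --> 1 + (HY - HXY) / HX) /\
  (0 < HY <= HX -> IA (zero_freed B e) @[e --> 0^'+] --> 1 + (HX - HXY) / HY).
Proof.
move=> n2 B0 B_neq0 l m HX HY HXY.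
have S0 := Ssum_gt0 B0 B_neq0.
have HY_case := cvg_IA_entropy_plus_pY0 B0 S0 n2.
have HX_case := cvg_IA_entropy_plus_pX0 B0 S0 n2.
have XY_case := cvg_IA_entropy_plus_le B0 S0.
have YX_case := cvg_IA_entropy_plus_ge B0 S0.
split; last by [].
have [/HY_case/cvgP //|HY_neq0] := eqVneq HY 0.
have [/HX_case/cvgP //|HX_neq0] := eqVneq HX 0.
have S_neq0 : Ssum B != 0 by rewrite gt_eqF.
have HX_gt0 : 0 < HX by rewrite lt_def HX_neq0 entropy_plus_pX_ge0.
have HY_gt0 : 0 < HY by rewrite lt_def HY_neq0 entropy_plus_pY_ge0.
have [HX_le_HY|/ltW HY_le_HX] := leP HX HY.
  by apply/cvgP/XY_case; rewrite HX_gt0.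
by apply/cvgP/YX_case; rewrite HY_gt0.
Qed.
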